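(* Let $\mathcal T$, $e_0$, $\mathcal T_0$, $\mathcal T_1$, the coordinate $x$, the set $\sigma_1$, the function $\mu^-(\lambda)$ and the functions $U(x,\lambda)$, $V(x,\lambda)$ on $[0,1]$ be as in the context. If $\lambda\in\mathbb C\setminus\sigma_1$, then $V(\cdot,\lambda)$ may be extended to a solution of $-y''=\lambda y$ on $\mathcal T_0$, depending only on $x\in[0,\infty)$, which is continuous and satisfies the jump conditions $y'(x^+)=y'(x^-)/\delta_R$ for even integers $x>0$ and $y'(x^+)=y'(x^-)/\delta_B$ for odd integers $x>0$ (hence the vertex conditions $\sum_{e\sim v}\partial_\nu y_e(v)=0$ at all vertices of $\mathcal T_0$ with $x>0$), and this extension is square integrable on $\mathcal T_0$. Analogously, $U(\cdot,\lambda)$ may be extended to a solution of $-y''=\lambda y$ on $\mathcal T_1$, depending only on $x\in(-\infty,1]$, which is continuous and satisfies $y'(x^-)=y'(x^+)/\delta_R$ for even integers $x<1$ and $y'(x^-)=y'(x^+)/\delta_B$ for odd integers $x<1$ (hence the vertex conditions at all vertices of $\mathcal T_1$ with $x<1$), and this extension is square integrable on $\mathcal T_1$.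
   Context: $\mathcal T$ is the infinite biregular tree: vertices split into classes $\mathcal V_R,\mathcal V_B$, each edge joins $\mathcal V_R$ to $\mathcal V_B$, vertices in $\mathcal V_B$ have degree $\delta_B+1$ and in $\mathcal V_R$ degree $\delta_R+1$ ($\delta_B,\delta_R\ge1$ integers); every edge is identified with $[0,1]$. Fix an edge $e_0=\{r_0,b_0\}$ with $r_0\in\mathcal V_R$, identified with $[0,1]$ so that $r_0\leftrightarrow0$, $b_0\leftrightarrow1$. $\mathcal T_0$ is the union of all nonbacktracking rays with vertex sequence $r_0,b_0,r_1,b_1,\dots$; a point of $\mathcal T_0$ gets coordinate $x\in[0,\infty)$ = its distance from $r_0$ (so even integers are $R$-vertices, odd integers $B$-vertices). $\mathcal T_1$ is the union of all nonbacktracking rays with vertex sequence $b_0,r_0,b_{-1},r_{-1},\dots$; a point gets coordinate $x=1-(\text{distance from }b_0)\in(-\infty,1]$. With $\omega=\sqrt\lambda$ put $c=\cos\omega$, $c'=-\omega\sin\omega$, $s=\sin\omega/\omega$, $s'=\cos\omega$, $M_0=\begin{pmatrix}c&s\\c'&s'\end{pmatrix}$, $J_B=\operatorname{diag}(1,1/\delta_B)$, $J_R=\operatorname{diag}(1,1/\delta_R)$, $T_0(\lambda)=J_RM_0J_BM_0$, and $\sigma_1=\{\lambda\in\mathbb C: T_0(\lambda)$ has an eigenvalue of modulus $(\delta_B\delta_R)^{-1/2}\}$. On $\mathbb C\setminus\sigma_1$, $\mu^-(\lambda)$ denotes the analytic choice of eigenvalue of $T_0(\lambda)$ with $|\mu^-(\lambda)|<(\delta_B\delta_R)^{-1/2}$.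 For $x\in[0,1]$, $V(x,\lambda)=sc(1+\tfrac1{\delta_B})\cos(\omega x)+[\mu^--c^2-\tfrac{sc'}{\delta_B}]\tfrac{\sin(\omega x)}{\omega}$ and $U(x,\lambda)=-sc(1+\tfrac1{\delta_R})\cos(\omega(1-x))-[\mu^--c^2-\tfrac{sc'}{\delta_R}]\tfrac{\sin(\omega(1-x))}{\omega}$. *)

From Stdlib Require Import Reals.
From Coquelicot Require Import Coquelicot.
Open Scope R_scope.

Definition Ccos (z : C) : C :=
  (cos (Re z) * cosh (Im z), - (sin (Re z) * sinh (Im z))).
Definition Csin (z : C) : C :=
  (sin (Re z) * cosh (Im z), cos (Re z) * sinh (Im z)).

(* sin(w x)/w, with its value x at w = 0 (the entire function of w^2). *)
Definition Csinc (w : C) (x : R) : C :=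
  if Ceq_dec w 0%C then RtoC x else (Csin (w * RtoC x) / w)%C.

Definition cc (w : C) : C := Ccos w.
Definition cc' (w : C) : C := (- (w * Csin w))%C.
Definition ss (w : C) : C := Csinc w 1.
Definition ss' (w : C) : C := Ccos w.

Definition mat2 : Type := ((C * C) * (C * C))%type.
Definition mk2 (a b c d : C) : mat2 := ((a, b), (c, d)).
Definition m11 (A : mat2) : C := fst (fst A).
Definition m12 (A : mat2) : C := snd (fst A).
Definition m21 (A : mat2) : C := fst (snd A).
Definition m22 (A : mat2) : C := snd (snd A).
Definition mul2 (A B : mat2) : mat2 :=
  mk2 (m11 A * m11 B + m12 A * m21 B)%C (m11 A * m12 B + m12 A * m22 B)%C
      (m21 A * m11 B + m22 A * m21 B)%C (m21 A * m12 B + m22 A * m22 B)%C.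

Definition is_eigenvalue (A : mat2) (mu : C) : Prop :=
  exists v1 v2 : C, (v1 <> 0%C \/ v2 <> 0%C) /\
    (m11 A * v1 + m12 A * v2 = mu * v1)%C /\
    (m21 A * v1 + m22 A * v2 = mu * v2)%C.

Definition M0 (w : C) : mat2 := mk2 (cc w) (ss w) (cc' w) (ss' w).
Definition Jd (d : nat) : mat2 := mk2 1%C 0%C 0%C (RtoC (/ INR d)).

Definition T0 (dB dR : nat) (w : C) : mat2 :=
  mul2 (Jd dR) (mul2 (M0 w) (mul2 (Jd dB) (M0 w))).

(* lambda (with square root w) lies in sigma_1 *)
Definition in_sigma1 (dB dR : nat) (w : C) : Prop :=
  exists mu : C, is_eigenvalue (T0 dB dR w) mu /\
    Cmod mu = / sqrt (INR dB * INR dR).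

Definition Vfun (dB : nat) (w mu : C) (x : R) : C :=
  (ss w * cc w * (1 + RtoC (/ INR dB)) * Ccos (w * RtoC x)
   + (mu - cc w * cc w - ss w * cc' w * RtoC (/ INR dB)) * Csinc w x)%C.

Definition Ufun (dR : nat) (w mu : C) (x : R) : C :=
  (- (ss w * cc w * (1 + RtoC (/ INR dR)) * Ccos (w * RtoC (1 - x)))
   - (mu - cc w * cc w - ss w * cc' w * RtoC (/ INR dR)) * Csinc w (1 - x))%C.

Definition is_rderive (f : R -> C) (x : R) (l : C) : Prop :=
  filterlim (fun h : R => scal (/ h) (minus (f (x + h)) (f x)))
            (at_right 0) (locally l).
Definition is_lderive (f : R -> C) (x : R) (l : C) : Prop :=
  filterlim (fun h : R => scal (/ h) (minus (f (x + h)) (f x)))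
            (at_left 0) (locally l).

(* T_0: the segment k <= x <= k+1 consists of dB^ceil(k/2) * dR^floor(k/2)
   edges (1, dB, dB dR, dB^2 dR, ...). *)
Definition nedges0 (dB dR k : nat) : R :=
  INR (dB ^ (Nat.div (S k) 2) * dR ^ (Nat.div k 2)).
(* T_1: the segment -k <= x <= 1-k consists of dR^ceil(k/2) * dB^floor(k/2)
   edges (1, dR, dR dB, dR^2 dB, ...). *)
Definition nedges1 (dB dR k : nat) : R :=
  INR (dR ^ (Nat.div (S k) 2) * dB ^ (Nat.div k 2)).

Definition radial_sol_T0 (dB dR : nat) (lam : C) (y : R -> C) : Prop :=
  (forall x : R, 0 < x -> continuous y x) /\
  (exists dy : R -> C, forall (k : nat) (x : R), INR k < x < INR k + 1 ->
     is_derive y x (dy x) /\ is_derive dy x (- (lam * y x))%C) /\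
  (forall k : nat, (1 <= k)%nat ->
     exists dl dr : C, is_lderive y (INR k) dl /\ is_rderive y (INR k) dr /\
       dr = (dl * RtoC (/ INR (if Nat.even k then dR else dB)))%C) /\
  ex_series (fun k : nat =>
     nedges0 dB dR k * RInt (fun x => (Cmod (y x)) ^ 2) (INR k) (INR k + 1)).

Definition radial_sol_T1 (dB dR : nat) (lam : C) (y : R -> C) : Prop :=
  (forall x : R, x < 1 -> continuous y x) /\
  (exists dy : R -> C, forall (k : nat) (x : R), - INR k < x < 1 - INR k ->
     is_derive y x (dy x) /\ is_derive dy x (- (lam * y x))%C) /\
  (forall k : nat,
     exists dl dr : C, is_lderive y (- INR k) dl /\ is_rderive y (- INR k) dr /\
       dl = (dr * RtoC (/ INR (if Nat.even k then dR else dB)))%C) /\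
  ex_series (fun k : nat =>
     nedges1 dB dR k * RInt (fun x => (Cmod (y x)) ^ 2) (- INR k) (1 - INR k)).

(** On an edge, a solution of [-y'' = w^2 y] is determined by its Cauchy data [(y, y')] at
    the start of the edge, and [M_0] maps these data to those at the end of the edge.  A
    radial function on [T_0] satisfies the vertex conditions at level [k] iff its derivative
    is divided there by the number of outgoing edges, so a radial solution is determined by
    its data at [r_0] and, after two edges, these data are multiplied by [T_0(lambda)].  The
    data of [V] form an eigenvector of [T_0(lambda)] for [mu], hence the data at level
    [2m + j] are [mu^m] times those at level [j].  As level [k] consists of
    [dB^ceil(k/2) dR^floor(k/2)] edges, the [L^2] mass of level [2m + j] is
    [(|mu|^2 dB dR)^m] times that of level [j]: a convergent geometric series.  [U] is the
    same construction on [T_1], i.e. with [dB] and [dR] exchanged, read through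
    [x |-> 1 - x]; the matrix [J_B M_0 J_R M_0] has the same characteristic polynomial as
    [T_0(lambda)], so [mu] is again an eigenvalue. *)

From Stdlib Require Import Reals Lra Lia.
From Coquelicot Require Import Coquelicot.
Open Scope R_scope.

Lemma is_derive_difference_quotient {V : NormedModule R_AbsRing} (f : R -> V) (x : R) (l : V) :
  is_derive f x l ->
  filterlim (fun h : R => scal (/ h) (minus (f (x + h)) (f x))) (locally' 0) (locally l).
Proof.
  intros [_ Hdomin]. apply filterlim_locally_ball_norm. intros eps.
  assert (Heps2 : 0 < eps / 2) by (destruct eps; simpl; lra).
  destruct (Hdomin x (fun P HP => HP) (mkposreal _ Heps2)) as [delta Hdelta].
  exists delta. intros h Hh Hh0.
  assert (Hxh : ball x delta (x + h)).
  { revert Hh. unfold ball; simpl; unfold AbsRing_ball, abs, minus, plus, opp; simpl.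
    now replace (x + h + - x) with (h + - 0) by ring. }
  specialize (Hdelta _ Hxh). simpl in Hdelta.
  assert (Eh : @minus (AbsRing_NormedModule R_AbsRing) (x + h) x = h)
    by (unfold minus, plus, opp; simpl; ring).
  rewrite Eh in Hdelta.
  change (@norm _ (AbsRing_NormedModule R_AbsRing) h) with (Rabs h) in Hdelta.
  assert (Hquot : minus (scal (/ h) (minus (f (x + h)) (f x))) l
                  = scal (/ h) (minus (minus (f (x + h)) (f x)) (scal h l))).
  { set (W := NormedModule.ModuleSpace R_AbsRing V).
    rewrite (@scal_minus_distr_l _ W (/ h) _ (scal h l)), (@scal_assoc _ W).
    assert (Hinv : @mult (AbsRing.Ring R_AbsRing) (/ h) h = one) by (apply Rinv_l; exact Hh0).
    now rewrite Hinv, (@scal_one _ W). }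
  unfold ball_norm.
  apply Rle_lt_trans with (norm (scal (/ h) (minus (minus (f (x + h)) (f x)) (scal h l)))).
  { right. exact (f_equal norm Hquot). }
  eapply Rle_lt_trans; [exact (norm_scal _ _)|].
  change (abs (/ h)) with (Rabs (/ h)). rewrite Rabs_inv.
  assert (Habs : 0 < Rabs h) by (apply Rabs_pos_lt; exact Hh0).
  apply (Rmult_le_compat_l (/ Rabs h)) in Hdelta; [|left; apply Rinv_0_lt_compat; exact Habs].
  replace (/ Rabs h * (eps / 2 * Rabs h)) with (eps / 2) in Hdelta by (field; lra).
  eapply Rle_lt_trans; [exact Hdelta|].
  destruct eps; simpl; lra.
Qed.

Lemma is_derive_shift {V : NormedModule R_AbsRing} (f : R -> V) (a x : R) (l : V) :
  is_derive f (x - a) l -> is_derive (fun t => f (t - a)) x l.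
Proof.
  intros Hf. rewrite <- (scal_one l).
  apply (is_derive_comp f (fun t => t - a)); [exact Hf|].
  auto_derive; auto.
Qed.

Lemma continuous_glue {V : UniformSpace} (y f g : R -> V) (x : R) :
  continuous f x -> continuous g x ->
  (forall t, x - 1 < t <= x -> y t = f t) -> (forall t, x <= t < x + 1 -> y t = g t) ->
  continuous y x.
Proof.
  intros Hf Hg Hyf Hyg.
  apply filterlim_locally. intros eps.
  pose proof (proj1 (filterlim_locally _ _) Hf eps) as Nf.
  pose proof (proj1 (filterlim_locally _ _) Hg eps) as Ng.
  rewrite <- (Hyf x) in Nf by lra. rewrite <- (Hyg x) in Ng by lra.
  assert (Near : locally x (fun t : R => x - 1 < t < x + 1))
    by (apply (locally_interval _ x (x - 1) (x + 1)); simpl; auto; lra).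
  generalize (filter_and _ _ (filter_and _ _ Nf Ng) Near).
  apply filter_imp. intros t [[Bf Bg] Bt].
  destruct (Rle_lt_dec t x).
  - rewrite (Hyf t) by lra. exact Bf.
  - rewrite (Hyg t) by lra. exact Bg.
Qed.

Lemma RInt_shift (f : R -> R) (a b c : R) :
  ex_RInt f (a - c) (b - c) -> RInt (fun x => f (x - c)) a b = RInt f (a - c) (b - c).
Proof.
  intros Hf. apply is_RInt_unique.
  assert (Hlin : is_RInt f (1 * a + - c) (1 * b + - c) (RInt f (a - c) (b - c))).
  { replace (1 * a + - c) with (a - c) by ring. replace (1 * b + - c) with (b - c) by ring.
    apply (@RInt_correct R_CompleteNormedModule), Hf. }
  eapply is_RInt_ext; [|exact (is_RInt_comp_lin f 1 (- c) a b _ Hlin)]. intros y _.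
  change (1 * f (1 * y + - c) = f (y - c)).
  replace (1 * y + - c) with (y - c) by ring. ring.
Qed.

Lemma RInt_reflect (f : R -> R) (a b : R) :
  ex_RInt f (1 - b) (1 - a) -> RInt (fun x => f (1 - x)) a b = RInt f (1 - b) (1 - a).
Proof.
  intros Hf. apply is_RInt_unique.
  assert (Hswap : is_RInt f (-1 * a + 1) (-1 * b + 1) (opp (RInt f (1 - b) (1 - a)))).
  { replace (-1 * a + 1) with (1 - a) by ring. replace (-1 * b + 1) with (1 - b) by ring.
    apply (@is_RInt_swap R_NormedModule), (@RInt_correct R_CompleteNormedModule), Hf. }
  pose proof (is_RInt_opp _ _ _ _ (is_RInt_comp_lin f (-1) 1 a b _ Hswap)) as Hlin.
  rewrite opp_opp in Hlin.
  eapply is_RInt_ext; [|exact Hlin]. intros y _.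
  change (- (-1 * f (-1 * y + 1)) = f (1 - y)).
  replace (-1 * y + 1) with (1 - y) by ring. ring.
Qed.

(* [(1 + q) / 2] lies in [[1/2, 1)] and its square dominates [q]. *)
Lemma pow_le_geom_double (q : R) (m j : nat) : 0 <= q < 1 -> (j < 2)%nat ->
  q ^ m <= 2 * ((1 + q) / 2) ^ (2 * m + j).
Proof.
  intros Hq Hj. set (r := (1 + q) / 2).
  assert (Hqr : q ^ m <= r ^ (2 * m)).
  { rewrite pow_mult. apply pow_incr. unfold r. nra. }
  assert (Hr2m : 0 <= r ^ (2 * m)) by (apply pow_le; unfold r; lra).
  assert (Hrj : 1 <= 2 * r ^ j).
  { destruct j as [|[|j]]; [simpl; lra|simpl; unfold r; lra|lia]. }
  rewrite pow_add. nra.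
Qed.

Lemma ex_series_double_geom (a : nat -> R) (q : R) : 0 <= q < 1 ->
  (forall m j, a (2 * m + j)%nat = q ^ m * a j) -> ex_series a.
Proof.
  intros Hq Ha. set (K := Rabs (a 0%nat) + Rabs (a 1%nat)).
  apply ex_series_Rabs.
  apply (@ex_series_le _ R_CompleteNormedModule _ (fun k => 2 * K * ((1 + q) / 2) ^ k)).
  - intros k. rewrite (Nat.div_mod_eq k 2), Ha.
    set (j := (k mod 2)%nat). set (m := (k / 2)%nat).
    assert (Hj : (j < 2)%nat) by (apply Nat.mod_upper_bound; lia).
    assert (HaK : Rabs (a j) <= K).
    { unfold K. pose proof (Rabs_pos (a 0%nat)). pose proof (Rabs_pos (a 1%nat)).
      destruct j as [|[|j]]; lra || lia. }
    change (norm (Rabs (q ^ m * a j))) with (Rabs (Rabs (q ^ m * a j))).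
    rewrite Rabs_Rabsolu, Rabs_mult, Rabs_right by (apply Rle_ge, pow_le; lra).
    pose proof (pow_le_geom_double q m j Hq Hj). pose proof (pow_le q m (proj1 Hq)).
    pose proof (Rabs_pos (a j)). nra.
  - apply (@ex_series_scal _ R_NormedModule (2 * K)), ex_series_geom.
    rewrite Rabs_right; lra.
Qed.

Lemma sqr_mult_lt_1 (a P : R) : 0 < P -> 0 <= a -> a < / sqrt P -> a ^ 2 * P < 1.
Proof.
  intros HP Ha Hlt.
  assert (Hs : 0 < sqrt P) by (apply sqrt_lt_R0, HP).
  apply (Rmult_lt_compat_r (sqrt P)) in Hlt; [|exact Hs].
  rewrite Rinv_l in Hlt by lra.
  rewrite <- (sqrt_sqrt P) by lra.
  assert (0 <= a * sqrt P) by (apply Rmult_le_pos; lra).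
  replace (a ^ 2 * (sqrt P * sqrt P)) with ((a * sqrt P) * (a * sqrt P)) by ring.
  nra.
Qed.

Lemma is_derive_Re (f : R -> C) (x : R) (l : C) :
  is_derive f x l -> is_derive (fun t => Re (f t)) x (Re l).
Proof.
  intros H. eapply filterdiff_ext_lin.
  - eapply (filterdiff_comp f fst); [exact H|apply filterdiff_linear, is_linear_fst].
  - reflexivity.
Qed.

Lemma is_derive_Im (f : R -> C) (x : R) (l : C) :
  is_derive f x l -> is_derive (fun t => Im (f t)) x (Im l).
Proof.
  intros H. eapply filterdiff_ext_lin.
  - eapply (filterdiff_comp f snd); [exact H|apply filterdiff_linear, is_linear_snd].
  - reflexivity.
Qed.

Lemma is_derive_C (f : R -> C) (x : R) (l : C) :
  is_derive (fun t => Re (f t)) x (Re l) -> is_derive (fun t => Im (f t)) x (Im l) ->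
  is_derive f x l.
Proof.
  intros HRe HIm.
  pose proof (@is_derive_plus _ C_R_NormedModule _ _ x _ _
    (is_derive_scal_l _ x _ (1, 0) HRe) (is_derive_scal_l _ x _ (0, 1) HIm)) as H.
  assert (Hrecompose :
    forall z : C, @plus C_R_NormedModule (scal (Re z) (1, 0)) (scal (Im z) (0, 1)) = z).
  { intros [a b]. unfold plus, scal; simpl; unfold prod_plus, prod_scal, plus, scal; simpl;
      unfold mult; simpl. f_equal; ring. }
  rewrite Hrecompose in H. eapply is_derive_ext; [|exact H]. intros t. apply Hrecompose.
Qed.

Lemma is_derive_Cplus (f g : R -> C) (x : R) (l m : C) :
  is_derive f x l -> is_derive g x m -> is_derive (fun t => f t + g t)%C x (l + m)%C.
Proof. exact (is_derive_plus f g x l m). Qed.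

Lemma is_derive_Cmult_l (c : C) (f : R -> C) (x : R) (l : C) :
  is_derive f x l -> is_derive (fun t => c * f t)%C x (c * l)%C.
Proof.
  intros H. apply is_derive_C.
  - exact (is_derive_minus _ _ x _ _ (is_derive_scal _ x (Re c) _ (is_derive_Re f x l H))
                                   (is_derive_scal _ x (Im c) _ (is_derive_Im f x l H))).
  - exact (is_derive_plus _ _ x _ _ (is_derive_scal _ x (Re c) _ (is_derive_Im f x l H))
                                  (is_derive_scal _ x (Im c) _ (is_derive_Re f x l H))).
Qed.

Lemma is_derive_reflect (f : R -> C) (x : R) (l : C) :
  is_derive f (1 - x) l -> is_derive (fun t => f (1 - t)) x (- l)%C.
Proof.
  intros Hf. replace (- l)%C with (scal (-1) l)
    by (apply injective_projections; simpl; unfold scal; simpl; unfold mult; simpl; ring).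
  apply (is_derive_comp f (fun t => 1 - t)); [exact Hf|].
  auto_derive; auto.
Qed.

Lemma continuous_Cmod_sqr (f : R -> C) (x : R) (l : C) :
  is_derive f x l -> continuous (fun t => Cmod (f t) ^ 2) x.
Proof.
  intros Hf.
  apply (continuous_ext (fun t => Re (f t) ^ 2 + Im (f t) ^ 2));
    [intros t; symmetry; apply Cmod2_alt|].
  apply (@ex_derive_continuous _ R_NormedModule).
  apply (@ex_derive_plus _ R_NormedModule (fun t => Re (f t) ^ 2) (fun t => Im (f t) ^ 2));
    apply ex_derive_pow; eexists;
    [apply (is_derive_Re f x l Hf)|apply (is_derive_Im f x l Hf)].
Qed.

Lemma is_rderive_of_is_derive (f y : R -> C) (x : R) (l : C) :
  is_derive f x l -> (forall t, x <= t < x + 1 -> y t = f t) -> is_rderive y x l.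
Proof.
  intros Hf Hyf. unfold is_rderive.
  eapply filterlim_ext_loc; [|eapply filterlim_filter_le_1;
    [|exact (is_derive_difference_quotient f x l Hf)]].
  - exists (mkposreal 1 Rlt_0_1). intros h Hh Hpos.
    apply Rabs_def2 in Hh. unfold minus, plus, opp in Hh; simpl in Hh.
    rewrite !Hyf by lra. reflexivity.
  - intros P [d Hd]. exists d. intros h Hh Hpos. apply Hd; [exact Hh|lra].
Qed.

Lemma is_lderive_of_is_derive (f y : R -> C) (x : R) (l : C) :
  is_derive f x l -> (forall t, x - 1 < t <= x -> y t = f t) -> is_lderive y x l.
Proof.
  intros Hf Hyf. unfold is_lderive.
  eapply filterlim_ext_loc; [|eapply filterlim_filter_le_1;
    [|exact (is_derive_difference_quotient f x l Hf)]].
  - exists (mkposreal 1 Rlt_0_1). intros h Hh Hneg.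
    apply Rabs_def2 in Hh. unfold minus, plus, opp in Hh; simpl in Hh.
    rewrite !Hyf by lra. reflexivity.
  - intros P [d Hd]. exists d. intros h Hh Hneg. apply Hd; [exact Hh|lra].
Qed.

Lemma difference_quotient_reflect (z : R -> C) (t h : R) : h <> 0 ->
  scal (/ h) (minus (z (1 - (1 - t + h))) (z (1 - (1 - t))))
  = opp (scal (/ - h) (minus (z (t + - h)) (z t))).
Proof.
  intros Hh.
  replace (1 - (1 - t + h)) with (t + - h) by ring. replace (1 - (1 - t)) with t by ring.
  apply injective_projections; simpl; unfold scal, plus, opp, minus; simpl; unfold mult; simpl;
    field; exact Hh.
Qed.

Lemma is_lderive_reflect (z : R -> C) (t : R) (d : C) :
  is_rderive z t d -> is_lderive (fun x => z (1 - x)) (1 - t) (- d)%C.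
Proof.
  unfold is_rderive, is_lderive. intros Hz.
  assert (Hopp := filterlim_Ropp_left 0). rewrite Ropp_0 in Hopp.
  eapply filterlim_ext_loc; [|exact (filterlim_comp _ _ _ _ _ _ _ _
    (filterlim_comp _ _ _ _ _ _ _ _ Hopp Hz) (filterlim_opp d))].
  exists (mkposreal 1 Rlt_0_1). intros h _ Hh.
  symmetry. apply difference_quotient_reflect. lra.
Qed.

Lemma is_rderive_reflect (z : R -> C) (t : R) (d : C) :
  is_lderive z t d -> is_rderive (fun x => z (1 - x)) (1 - t) (- d)%C.
Proof.
  unfold is_rderive, is_lderive. intros Hz.
  assert (Hopp := filterlim_Ropp_right 0). rewrite Ropp_0 in Hopp.
  eapply filterlim_ext_loc; [|exact (filterlim_comp _ _ _ _ _ _ _ _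
    (filterlim_comp _ _ _ _ _ _ _ _ Hopp Hz) (filterlim_opp d))].
  exists (mkposreal 1 Rlt_0_1). intros h _ Hh.
  symmetry. apply difference_quotient_reflect. lra.
Qed.

Lemma is_derive_Ccos_mult (w : C) (x : R) :
  is_derive (fun t : R => Ccos (w * t)) x (- (w * Csin (w * x)))%C.
Proof.
  destruct w as [p q].
  apply is_derive_C; unfold Ccos, Csin; simpl; auto_derive; auto; unfold Rminus; ring.
Qed.

Lemma is_derive_Csin_mult (w : C) (x : R) :
  is_derive (fun t : R => Csin (w * t)) x (w * Ccos (w * x))%C.
Proof.
  destruct w as [p q].
  apply is_derive_C; unfold Ccos, Csin; simpl; auto_derive; auto; unfold Rminus; ring.
Qed.

Lemma Cmult_Csinc (w : C) (t : R) : (w * Csinc w t = Csin (w * t))%C.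
Proof.
  unfold Csinc. destruct (Ceq_dec w 0) as [->|Hw].
  - unfold Csin; simpl. rewrite !Rmult_0_l, Rminus_0_r, Rplus_0_r, sin_0, sinh_0.
    apply injective_projections; simpl; ring.
  - field. exact Hw.
Qed.

Lemma is_derive_Csinc (w : C) (x : R) : is_derive (Csinc w) x (Ccos (w * x)).
Proof.
  unfold Csinc. destruct (Ceq_dec w 0) as [->|Hw].
  - apply is_derive_C; unfold Ccos; simpl; auto_derive; auto.
    + rewrite !Rmult_0_l, Rminus_0_r, Rplus_0_r, cos_0, cosh_0. ring.
    + rewrite !Rmult_0_l, Rminus_0_r, Rplus_0_r, sin_0, sinh_0. ring.
  - replace (Ccos (w * x)) with (/ w * (w * Ccos (w * x)))%C by (field; exact Hw).
    eapply is_derive_ext; [|apply is_derive_Cmult_l, is_derive_Csin_mult].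
    intros t. apply Cmult_comm.
Qed.

Lemma Ccos_mult_0 (w : C) : Ccos (w * 0) = 1%C.
Proof.
  unfold Ccos. simpl. rewrite !Rmult_0_r, Rminus_0_r, Rplus_0_r, cos_0, sin_0, cosh_0, sinh_0.
  apply injective_projections; simpl; ring.
Qed.

Lemma Csinc_0 (w : C) : Csinc w 0 = 0%C.
Proof.
  unfold Csinc, Csin. destruct (Ceq_dec w 0) as [_|Hw]; [reflexivity|].
  simpl. rewrite !Rmult_0_r, Rminus_0_r, Rplus_0_r, sin_0, sinh_0, !Rmult_0_l, Rmult_0_r.
  change ((RtoC 0 / w)%C = RtoC 0). field. exact Hw.
Qed.

Definition cscale (c : C) (v : C * C) : C * C := ((c * fst v)%C, (c * snd v)%C).

Definition mulv2 (A : mat2) (v : C * C) : C * C :=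
  ((m11 A * fst v + m12 A * snd v)%C, (m21 A * fst v + m22 A * snd v)%C).

Definition char2 (A : mat2) (mu : C) : C := ((m11 A - mu) * (m22 A - mu) - m12 A * m21 A)%C.

Definition eigvec2 (A : mat2) (mu : C) : C * C := (m12 A, (mu - m11 A)%C).

Lemma char2_eigenvalue (A : mat2) (mu : C) : is_eigenvalue A mu -> char2 A mu = 0%C.
Proof.
  intros [v1 [v2 [Hv [E1 E2]]]].
  assert (H1 : (char2 A mu * v1 = 0)%C).
  { transitivity ((m22 A - mu) * (m11 A * v1 + m12 A * v2 - mu * v1)
                  - m12 A * (m21 A * v1 + m22 A * v2 - mu * v2))%C;
      [unfold char2; ring|rewrite E1, E2; ring]. }
  assert (H2 : (char2 A mu * v2 = 0)%C).
  { transitivity ((m11 A - mu) * (m21 A * v1 + m22 A * v2 - mu * v2)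
                  - m21 A * (m11 A * v1 + m12 A * v2 - mu * v1))%C;
      [unfold char2; ring|rewrite E1, E2; ring]. }
  destruct (Ceq_dec (char2 A mu) 0) as [|Hchar]; [assumption|exfalso].
  destruct Hv as [Hv|Hv];
    [exact (Cmult_neq_0 _ _ Hchar Hv H1)|exact (Cmult_neq_0 _ _ Hchar Hv H2)].
Qed.

Lemma mul2_assoc (A B D : mat2) : mul2 A (mul2 B D) = mul2 (mul2 A B) D.
Proof. unfold mul2, mk2, m11, m12, m21, m22; simpl. f_equal; f_equal; ring. Qed.

Lemma char2_mul2C (A B : mat2) (mu : C) : char2 (mul2 A B) mu = char2 (mul2 B A) mu.
Proof. unfold char2, mul2, mk2, m11, m12, m21, m22; simpl. ring. Qed.

Lemma mulv2_eigvec2 (A : mat2) (mu c : C) : char2 A mu = 0%C ->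
  mulv2 A (cscale c (eigvec2 A mu)) = cscale mu (cscale c (eigvec2 A mu)).
Proof.
  intros Hchar. unfold mulv2, cscale, eigvec2; simpl. f_equal; [ring|].
  transitivity (mu * (c * (mu - m11 A)) - c * char2 A mu)%C;
    [unfold char2; ring|rewrite Hchar; ring].
Qed.

Lemma char2_T0_swap (dB dR : nat) (w mu : C) :
  char2 (T0 dR dB w) mu = char2 (T0 dB dR w) mu.
Proof.
  unfold T0. rewrite (mul2_assoc (Jd dR) (M0 w)), (mul2_assoc (Jd dB) (M0 w)).
  apply char2_mul2C.
Qed.

Definition edge_sol (w : C) (s : C * C) (t : R) : C :=
  (fst s * Ccos (w * t) + snd s * Csinc w t)%C.

Definition edge_sol' (w : C) (s : C * C) (t : R) : C :=
  (fst s * - (w * Csin (w * t)) + snd s * Ccos (w * t))%C.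

Lemma is_derive_edge_sol (w : C) (s : C * C) (x : R) :
  is_derive (edge_sol w s) x (edge_sol' w s x).
Proof.
  apply is_derive_Cplus; apply is_derive_Cmult_l.
  - apply is_derive_Ccos_mult.
  - apply is_derive_Csinc.
Qed.

Lemma is_derive_edge_sol' (w : C) (s : C * C) (x : R) :
  is_derive (edge_sol' w s) x (- (w * w * edge_sol w s x))%C.
Proof.
  assert (E : forall t : R,
    (- (fst s * w) * Csin (w * t) + snd s * Ccos (w * t))%C = edge_sol' w s t)
    by (intros t; unfold edge_sol'; ring).
  eapply is_derive_ext; [exact E|].
  replace (- (w * w * edge_sol w s x))%C
    with (- (fst s * w) * (w * Ccos (w * x)) + snd s * - (w * Csin (w * x)))%C
    by (unfold edge_sol; rewrite <- Cmult_Csinc; ring).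
  apply is_derive_Cplus; apply is_derive_Cmult_l.
  - apply is_derive_Csin_mult.
  - apply is_derive_Ccos_mult.
Qed.

Lemma is_derive_edge_sol_shift (w : C) (s : C * C) (a x : R) :
  is_derive (fun t => edge_sol w s (t - a)) x (edge_sol' w s (x - a)).
Proof. apply is_derive_shift, is_derive_edge_sol. Qed.

Lemma continuous_edge_sol_shift (w : C) (s : C * C) (a x : R) :
  continuous (fun t => edge_sol w s (t - a)) x.
Proof.
  apply (@ex_derive_continuous _ C_R_NormedModule). eexists.
  apply is_derive_edge_sol_shift.
Qed.

Lemma edge_sol_0 (w : C) (s : C * C) : edge_sol w s 0 = fst s.
Proof. unfold edge_sol. rewrite Ccos_mult_0, Csinc_0. ring. Qed.

Lemma edge_sol'_0 (w : C) (s : C * C) : edge_sol' w s 0 = snd s.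
Proof. unfold edge_sol'. rewrite <- Cmult_Csinc, Csinc_0, Ccos_mult_0. ring. Qed.

Lemma edge_sol_cscale (w c : C) (s : C * C) (t : R) :
  edge_sol w (cscale c s) t = (c * edge_sol w s t)%C.
Proof. unfold edge_sol, cscale; simpl. ring. Qed.

Definition edge_L2 (w : C) (s : C * C) : R := RInt (fun t => Cmod (edge_sol w s t) ^ 2) 0 1.

Lemma ex_RInt_Cmod_edge_sol_shift (w : C) (s : C * C) (a b c : R) :
  ex_RInt (fun x => Cmod (edge_sol w s (x - c)) ^ 2) a b.
Proof.
  apply (@ex_RInt_continuous R_CompleteNormedModule). intros z _.
  eapply continuous_Cmod_sqr, is_derive_edge_sol_shift.
Qed.

Lemma edge_L2_cscale (w c : C) (s : C * C) :
  edge_L2 w (cscale c s) = Cmod c ^ 2 * edge_L2 w s.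
Proof.
  unfold edge_L2. rewrite <- (RInt_scal (fun t => Cmod (edge_sol w s t) ^ 2)).
  - apply RInt_ext. intros t _. rewrite edge_sol_cscale, Cmod_mult.
    unfold scal; simpl; unfold mult; simpl. ring.
  - apply (@ex_RInt_continuous R_CompleteNormedModule). intros z _.
    apply (continuous_Cmod_sqr _ z _ (is_derive_edge_sol w s z)).
Qed.

(** * Radial solutions on [T_0] *)

(* Kirchhoff's condition at a vertex with [d] outgoing edges: the derivative is divided by [d]. *)
Definition vertex_step (w : C) (d : nat) (s : C * C) : C * C :=
  (edge_sol w s 1, (edge_sol' w s 1 * RtoC (/ INR d))%C).

(* The Cauchy data [(y(k), y'(k+))] at the vertices of level [k]. *)
Fixpoint vertex_data (w : C) (dB dR : nat) (s0 : C * C) (k : nat) : C * C :=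
  match k with
  | O => s0
  | S k' => vertex_step w (if Nat.even k then dR else dB) (vertex_data w dB dR s0 k')
  end.

Lemma vertex_step_cscale (w : C) (d : nat) (c : C) (s : C * C) :
  vertex_step w d (cscale c s) = cscale c (vertex_step w d s).
Proof. unfold vertex_step, cscale, edge_sol, edge_sol'; simpl. f_equal; ring. Qed.

Lemma vertex_data_2 (w : C) (dB dR : nat) (s0 : C * C) :
  vertex_data w dB dR s0 2 = mulv2 (T0 dB dR w) s0.
Proof.
  assert (Hw1 : (w * RtoC 1 = w)%C) by (apply injective_projections; simpl; ring).
  simpl. unfold vertex_step, edge_sol, edge_sol', mulv2, T0, M0, Jd, mul2, mk2,
    m11, m12, m21, m22, cc, cc', ss, ss'; simpl.
  rewrite Hw1. f_equal; ring.
Qed.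

Lemma nedges0_double (dB dR m j : nat) :
  nedges0 dB dR (2 * m + j) = (INR dB * INR dR) ^ m * nedges0 dB dR j.
Proof.
  unfold nedges0.
  replace (S (2 * m + j)) with (m * 2 + S j)%nat by lia.
  replace (2 * m + j)%nat with (m * 2 + j)%nat by lia.
  rewrite !Nat.div_add_l by lia.
  rewrite !Nat.pow_add_r, !mult_INR, !pow_INR, Rpow_mult_distr. ring.
Qed.

Definition edge_index (x : R) : nat := Z.to_nat (Zfloor x).

Lemma edge_index_eq (k : nat) (x : R) : INR k <= x < INR k + 1 -> edge_index x = k.
Proof.
  intros Hx. unfold edge_index. rewrite (Zfloor_eq (Z.of_nat k)).
  - apply Znat.Nat2Z.id.
  - rewrite <- INR_IZR_INZ. exact Hx.
Qed.

Lemma edge_index_bound (x : R) : 0 <= x -> INR (edge_index x) <= x < INR (edge_index x) + 1.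
Proof.
  intros Hx. unfold edge_index.
  rewrite INR_IZR_INZ, Znat.Z2Nat.id; [apply Zfloor_bound|].
  apply Zfloor_lub. exact Hx.
Qed.

Section RadialExtension.

Variables (w : C) (dB dR : nat) (s0 : C * C).

Definition radial_ext (x : R) : C :=
  edge_sol w (vertex_data w dB dR s0 (edge_index x)) (x - INR (edge_index x)).

Definition radial_ext' (x : R) : C :=
  edge_sol' w (vertex_data w dB dR s0 (edge_index x)) (x - INR (edge_index x)).

Lemma radial_ext_on_edge (k : nat) (x : R) : INR k <= x <= INR k + 1 ->
  radial_ext x = edge_sol w (vertex_data w dB dR s0 k) (x - INR k).
Proof.
  intros Hx. unfold radial_ext. destruct (Rlt_le_dec x (INR k + 1)).
  - now rewrite (edge_index_eq k x) by lra.
  - assert (Ex : x = INR (S k)) by (rewrite S_INR; lra).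
    rewrite (edge_index_eq (S k) x) by lra.
    rewrite Ex, Rminus_diag, edge_sol_0, S_INR.
    now replace (INR k + 1 - INR k) with 1 by ring.
Qed.

Lemma radial_ext'_on_edge (k : nat) (x : R) : INR k <= x < INR k + 1 ->
  radial_ext' x = edge_sol' w (vertex_data w dB dR s0 k) (x - INR k).
Proof. intros Hx. unfold radial_ext'. now rewrite (edge_index_eq k x). Qed.

Lemma radial_ext_on_edge0 (x : R) : 0 <= x <= 1 -> radial_ext x = edge_sol w s0 x.
Proof.
  intros Hx. rewrite (radial_ext_on_edge 0) by (simpl; lra).
  simpl. now rewrite Rminus_0_r.
Qed.

Lemma radial_ext_near_edge (k : nat) (x : R) : INR k < x < INR k + 1 ->
  locally x (fun t => edge_sol w (vertex_data w dB dR s0 k) (t - INR k) = radial_ext t).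
Proof.
  intros Hx. apply (locally_interval _ x (INR k) (INR k + 1)); simpl; try lra.
  intros t Ht1 Ht2. symmetry. apply radial_ext_on_edge. lra.
Qed.

Lemma radial_ext'_near_edge (k : nat) (x : R) : INR k < x < INR k + 1 ->
  locally x (fun t => edge_sol' w (vertex_data w dB dR s0 k) (t - INR k) = radial_ext' t).
Proof.
  intros Hx. apply (locally_interval _ x (INR k) (INR k + 1)); simpl; try lra.
  intros t Ht1 Ht2. symmetry. apply radial_ext'_on_edge. lra.
Qed.

Lemma continuous_radial_ext (x : R) : 0 < x -> continuous radial_ext x.
Proof.
  intros Hx. pose proof (edge_index_bound x (Rlt_le _ _ Hx)) as Hk.
  destruct (Rle_lt_or_eq_dec _ _ (proj1 Hk)) as [Hlt|Heq].
  - eapply continuous_ext_loc; [apply (radial_ext_near_edge (edge_index x)); lra|].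
    apply continuous_edge_sol_shift.
  - destruct (edge_index x) as [|k] eqn:E; [simpl in Heq; lra|].
    rewrite S_INR in Heq.
    apply (continuous_glue _ (fun t => edge_sol w (vertex_data w dB dR s0 k) (t - INR k))
                             (fun t => edge_sol w (vertex_data w dB dR s0 (S k)) (t - INR (S k))));
      try apply continuous_edge_sol_shift;
      intros t Ht; apply radial_ext_on_edge; rewrite ?S_INR; lra.
Qed.

Lemma radial_ext_ode (k : nat) (x : R) : INR k < x < INR k + 1 ->
  is_derive radial_ext x (radial_ext' x) /\
  is_derive radial_ext' x (- (w * w * radial_ext x))%C.
Proof.
  intros Hx. rewrite (radial_ext'_on_edge k), (radial_ext_on_edge k) by lra. split.
  - eapply is_derive_ext_loc; [apply radial_ext_near_edge, Hx|].
    apply is_derive_edge_sol_shift.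
  - eapply is_derive_ext_loc; [apply radial_ext'_near_edge, Hx|].
    apply is_derive_shift, is_derive_edge_sol'.
Qed.

Lemma radial_ext_jump (k : nat) : (1 <= k)%nat ->
  exists dl dr : C, is_lderive radial_ext (INR k) dl /\ is_rderive radial_ext (INR k) dr /\
    dr = (dl * RtoC (/ INR (if Nat.even k then dR else dB)))%C.
Proof.
  intros Hk. destruct k as [|k]; [lia|].
  exists (edge_sol' w (vertex_data w dB dR s0 k) 1), (snd (vertex_data w dB dR s0 (S k))).
  split; [|split; [|reflexivity]].
  - apply (is_lderive_of_is_derive (fun t => edge_sol w (vertex_data w dB dR s0 k) (t - INR k))).
    + replace 1 with (INR (S k) - INR k) by (rewrite S_INR; ring).
      apply is_derive_edge_sol_shift.
    + intros t Ht. apply radial_ext_on_edge. rewrite S_INR in Ht. lra.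
  - apply (is_rderive_of_is_derive
             (fun t => edge_sol w (vertex_data w dB dR s0 (S k)) (t - INR (S k)))).
    + rewrite <- (edge_sol'_0 w), <- (Rminus_diag (INR (S k))).
      apply is_derive_edge_sol_shift.
    + intros t Ht. apply radial_ext_on_edge. lra.
Qed.

Lemma ex_RInt_Cmod_radial_ext (k : nat) :
  ex_RInt (fun x => Cmod (radial_ext x) ^ 2) (INR k) (INR k + 1).
Proof.
  eapply ex_RInt_ext;
    [|apply (ex_RInt_Cmod_edge_sol_shift w (vertex_data w dB dR s0 k) _ _ (INR k))].
  intros x Hx. rewrite Rmin_left, Rmax_right in Hx by lra.
  rewrite (radial_ext_on_edge k) by lra. reflexivity.
Qed.

Lemma RInt_Cmod_radial_ext (k : nat) :
  RInt (fun x => Cmod (radial_ext x) ^ 2) (INR k) (INR k + 1)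
  = edge_L2 w (vertex_data w dB dR s0 k).
Proof.
  rewrite (RInt_ext _ (fun x => Cmod (edge_sol w (vertex_data w dB dR s0 k) (x - INR k)) ^ 2)).
  - rewrite (RInt_shift (fun t => Cmod (edge_sol w (vertex_data w dB dR s0 k) t) ^ 2)).
    + unfold edge_L2. f_equal; ring.
    + apply (ex_RInt_ext (fun x => Cmod (edge_sol w (vertex_data w dB dR s0 k) (x - 0)) ^ 2)).
      * intros x _. cbv beta. now rewrite Rminus_0_r.
      * apply ex_RInt_Cmod_edge_sol_shift.
  - intros x Hx. rewrite Rmin_left, Rmax_right in Hx by lra.
    rewrite (radial_ext_on_edge k) by lra. reflexivity.
Qed.

Section Eigenvector.

Variable mu : C.
Hypothesis vertex_data_2_eigen : vertex_data w dB dR s0 2 = cscale mu s0.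

Lemma vertex_data_SS (k : nat) :
  vertex_data w dB dR s0 (S (S k)) = cscale mu (vertex_data w dB dR s0 k).
Proof.
  induction k as [|k IH]; [exact vertex_data_2_eigen|].
  change (vertex_data w dB dR s0 (S (S (S k))))
    with (vertex_step w (if Nat.even (S k) then dR else dB) (vertex_data w dB dR s0 (S (S k)))).
  now rewrite IH, vertex_step_cscale.
Qed.

Lemma vertex_data_double (m j : nat) :
  vertex_data w dB dR s0 (2 * m + j) = cscale (mu ^ m) (vertex_data w dB dR s0 j).
Proof.
  induction m as [|m IH].
  - unfold cscale. simpl. rewrite !Cmult_1_l. now destruct (vertex_data w dB dR s0 j).
  - replace (2 * S m + j)%nat with (S (S (2 * m + j))) by lia.
    rewrite vertex_data_SS, IH. unfold cscale; simpl. f_equal; ring.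
Qed.

Hypothesis mu_small : Cmod mu ^ 2 * (INR dB * INR dR) < 1.

Lemma radial_ext_square_summable :
  ex_series (fun k => nedges0 dB dR k *
    RInt (fun x => Cmod (radial_ext x) ^ 2) (INR k) (INR k + 1)).
Proof.
  apply (ex_series_double_geom _ (Cmod mu ^ 2 * (INR dB * INR dR))).
  - split; [|exact mu_small].
    pose proof (pos_INR dB). pose proof (pos_INR dR). pose proof (pow2_ge_0 (Cmod mu)).
    apply Rmult_le_pos, Rmult_le_pos; assumption.
  - intros m j.
    rewrite !RInt_Cmod_radial_ext, vertex_data_double, edge_L2_cscale, nedges0_double,
      Cmod_pow, <- pow_mult, Nat.mul_comm, pow_mult, !Rpow_mult_distr.
    ring.
Qed.

Theorem radial_sol_T0_radial_ext : radial_sol_T0 dB dR (w * w) radial_ext.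
Proof.
  split; [|split; [|split]].
  - apply continuous_radial_ext.
  - exists radial_ext'. apply radial_ext_ode.
  - apply radial_ext_jump.
  - exact radial_ext_square_summable.
Qed.

End Eigenvector.

End RadialExtension.

(** * Radial solutions on [T_1] *)

Theorem radial_sol_T1_reflect (dB dR : nat) (lam : C) (z : R -> C) :
  radial_sol_T0 dR dB lam z ->
  (forall k : nat, ex_RInt (fun x => Cmod (z x) ^ 2) (INR k) (INR k + 1)) ->
  radial_sol_T1 dB dR lam (fun x => z (1 - x)).
Proof.
  intros [Hcont [[dz Hode] [Hjump Hsum]]] Hint.
  split; [|split; [|split]].
  - intros x Hx. apply (continuous_comp (fun x : R => 1 - x) z); [|apply Hcont; lra].
    apply (@ex_derive_continuous _ R_NormedModule). auto_derive. exact I.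
  - exists (fun x : R => Copp (dz (1 - x))). intros k x Hx.
    destruct (Hode k (1 - x)) as [Hz Hdz]; [lra|]. split.
    + apply is_derive_reflect, Hz.
    + replace (- (lam * z (1 - x)%R))%C with (- - - (lam * z (1 - x)%R))%C by ring.
      apply (is_derive_opp (fun t => dz (1 - t))), is_derive_reflect, Hdz.
  - intros k. destruct (Hjump (S k)) as [dl [dr [Hl [Hr Hdr]]]]; [lia|].
    exists (- dr)%C, (- dl)%C.
    replace (- INR k) with (1 - INR (S k)) by (rewrite S_INR; ring).
    split; [|split].
    + apply is_lderive_reflect, Hr.
    + apply is_rderive_reflect, Hl.
    + rewrite Hdr, Nat.even_succ, <- Nat.negb_even.
      destruct (Nat.even k); simpl; ring.
  - eapply ex_series_ext; [|exact Hsum]. intros k. unfold nedges0, nedges1. f_equal.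
    rewrite (RInt_reflect (fun x => Cmod (z x) ^ 2));
      replace (1 - (1 - INR k)) with (INR k) by ring.
    + f_equal. ring.
    + replace (1 - - INR k) with (INR k + 1) by ring. apply Hint.
Qed.

Lemma Vfun_edge_sol (dB dR : nat) (w mu : C) (x : R) :
  Vfun dB w mu x = edge_sol w (cscale 1 (eigvec2 (T0 dB dR w) mu)) x.
Proof.
  unfold Vfun, edge_sol, cscale, eigvec2, T0, M0, Jd, mul2, mk2, m11, m12, m21, m22, ss', cc.
  simpl. ring.
Qed.

Lemma Ufun_edge_sol (dB dR : nat) (w mu : C) (x : R) :
  Ufun dR w mu x = edge_sol w (cscale (-1) (eigvec2 (T0 dR dB w) mu)) (1 - x).
Proof.
  unfold Ufun, edge_sol, cscale, eigvec2, T0, M0, Jd, mul2, mk2, m11, m12, m21, m22, ss', cc.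
  simpl. ring.
Qed.

Theorem theorem4p4 (dB dR : nat) (lam w mu : C) :
  (1 <= dB)%nat -> (1 <= dR)%nat ->
  (w * w)%C = lam ->
  ~ in_sigma1 dB dR w ->
  is_eigenvalue (T0 dB dR w) mu ->
  Cmod mu < / sqrt (INR dB * INR dR) ->
  (exists y : R -> C,
     (forall x : R, 0 <= x <= 1 -> y x = Vfun dB w mu x) /\
     radial_sol_T0 dB dR lam y) /\
  (exists y : R -> C,
     (forall x : R, 0 <= x <= 1 -> y x = Ufun dR w mu x) /\
     radial_sol_T1 dB dR lam y).
Proof.
  (* [lambda] outside [sigma_1] only makes [mu^-] well defined; [|mu| < (dB dR)^(-1/2)] is
     assumed directly. *)
  intros HdB HdR <- _ Heig Hmu.
  assert (Hq : Cmod mu ^ 2 * (INR dB * INR dR) < 1).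
  { apply (lt_INR 0) in HdB, HdR. simpl in HdB, HdR.
    apply sqr_mult_lt_1; [nra|apply Cmod_ge_0|exact Hmu]. }
  pose proof (char2_eigenvalue _ _ Heig) as Hchar.
  split.
  - exists (radial_ext w dB dR (cscale 1 (eigvec2 (T0 dB dR w) mu))). split.
    + intros x Hx. now rewrite radial_ext_on_edge0, (Vfun_edge_sol dB dR).
    + apply radial_sol_T0_radial_ext with mu; [|exact Hq].
      rewrite vertex_data_2. apply mulv2_eigvec2, Hchar.
  - exists (fun x => radial_ext w dR dB (cscale (-1) (eigvec2 (T0 dR dB w) mu)) (1 - x)).
    split.
    + intros x Hx. now rewrite radial_ext_on_edge0, (Ufun_edge_sol dB dR) by lra.
    + apply radial_sol_T1_reflect; [|apply ex_RInt_Cmod_radial_ext].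
      apply radial_sol_T0_radial_ext with mu.
      * rewrite vertex_data_2. apply mulv2_eigvec2. now rewrite char2_T0_swap.
      * now rewrite (Rmult_comm (INR dR)).
Qed.
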